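(* Let $k\ge1$, $n\ge 2k+1$, let $G$ be a spanning subgraph of $J(n;k,k+1)$, and let $m\ge3$. If for some $\gamma\in\binom{[n]}{k-1}$ the graph $H_\gamma=H_\gamma(G)$ contains a cycle of length $m$, then $G$ contains a cycle of length $2m$. Here $H_\gamma$ is the graph whose vertex set is the set of all $k$-subsets of $[n]$ containing $\gamma$, in which two distinct vertices $x,y$ are adjacent iff there is a path of length $2$ between $x$ and $y$ in $G$.
   Context: $J(n;k,k+1)$ is the bipartite graph with vertex set $\binom{[n]}{k}\cup\binom{[n]}{k+1}$ (subsets of $[n]=\{1,\dots,n\}$), with $u,v$ adjacent iff $u\subset v$ or $v\subset u$. A spanning subgraph has the same vertex set. *)

From mathcomp Require Import all_boot.
Set Implicit Arguments. Unset Strict Implicit. Unset Printing Implicit Defensive.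

Definition J_adj (n k : nat) (u v : {set 'I_n}) : bool :=
  ((#|u| == k) && (#|v| == k.+1) && (u \subset v)) ||
  ((#|v| == k) && (#|u| == k.+1) && (v \subset u)).

(* Vertices outside
   binom([n],k) ∪ binom([n],k+1) are then isolated and never lie on cycles. *)
Definition spanning_subgraph_J (n k : nat) (G : rel {set 'I_n}) : Prop :=
  (forall u v, G u v = G v u) /\ (forall u v, G u v -> J_adj k u v).

Definition has_cycle (T : finType) (V : pred T) (e : rel T) (m : nat) : Prop :=
  exists s : seq T, [/\ size s = m, uniq s, all V s & cycle e s].

Definition H_vert (n k : nat) (gamma : {set 'I_n}) : pred {set 'I_n} :=
  fun x => (#|x| == k) && (gamma \subset x).

Definition H_adj (n : nat) (G : rel {set 'I_n}) : rel {set 'I_n} :=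
  fun x y => (x != y) && [exists z, G x z && G z y].

From mathcomp Require Import all_boot.
Set Implicit Arguments. Unset Strict Implicit. Unset Printing Implicit Defensive.

(* Let x_0, ..., x_(m-1) be an m-cycle of H_gamma.  Consecutive
   vertices x, y are distinct k-sets joined in G by a path x - z - y; since G
   is a subgraph of J(n;k,k+1), z is a (k+1)-set containing x and y, hence
   z = x :|: y.  Inserting these unions between consecutive vertices
   ("subdividing" the cycle) gives the closed walk
   x_0, x_0 :|: x_1, x_1, ..., x_(m-1), x_(m-1) :|: x_0 of length 2m in G.
   It is a cycle: the unions are (k+1)-sets, so they differ from the x_i, and
   they are pairwise distinct because the x_i form a sunflower with core gamma
   (any two meet exactly in gamma), so x :|: y contains no petal other than x
   and y; as m >= 3, the pair {x_i, x_(i+1)} determines i. *)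

Section Subdivision.

Variables (T : eqType) (e : rel T) (h : T -> T).

Definition subdivide (s : seq T) : seq T := flatten [seq [:: a; h a] | a <- s].

Lemma size_subdivide s : size (subdivide s) = 2 * size s.
Proof. by elim: s => //= a s IHs; rewrite IHs mulnS. Qed.

Lemma perm_subdivide s : perm_eq (subdivide s) (s ++ map h s).
Proof.
elim: s => //= a s IHs.
by rewrite perm_cons perm_sym -cat1s perm_catCA perm_cat2l perm_sym.
Qed.

Lemma path_subdivide a0 p :
  path e (h a0) (subdivide p) = path (fun a b => e (h a) b && e b (h b)) a0 p.
Proof. by elim: p a0 => //= a p IHp a0; rewrite -IHp andbA. Qed.

Lemma cycle_subdivide s :
  cycle e (subdivide s) = cycle (fun a b => e (h a) b && e b (h b)) s.
Proof.
case: s => // x p; rewrite !(cycle_path x) -path_subdivide; congr path.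
by rewrite /subdivide /=; elim: p x => //= y p <-.
Qed.

End Subdivision.

Lemma next_orbit_distinct (T : eqType) (s : seq T) x :
  uniq s -> 2 < size s -> x \in s ->
  next s x != x /\ next s (next s x) != x.
Proof.
move=> s_uniq s_big /rot_to[i q rot_s]; rewrite -!(next_rot i s_uniq) rot_s.
have : uniq (x :: q) by rewrite -rot_s rot_uniq.
have : 2 < size (x :: q) by rewrite -rot_s size_rot.
case: q {rot_s} => [|y [|z q]] //= _; rewrite !inE !eqxx.
case/and4P=> /norP[xy /norP[xz _]] _ _ _.
by rewrite eq_sym (negPf xy) eq_sym.
Qed.

Section SubdivideCycle.

Variables (T : eqType) (e : rel T) (h : T -> T) (s : seq T).
Hypotheses (s_uniq : uniq s)
  (h_edges : {in s, forall a, e a (h a) && e (h a) (next s a)})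
  (h_inj : {in s &, injective h})
  (h_new : {in s, forall a, h a \notin s}).

Lemma subdivide_cycle :
  [/\ size (subdivide h s) = 2 * size s, uniq (subdivide h s)
    & cycle e (subdivide h s)].
Proof.
split; first exact: size_subdivide.
  rewrite (perm_uniq (perm_subdivide h s)) cat_uniq map_inj_in_uniq // s_uniq.
  by rewrite andbT /=; apply/hasPn => _ /mapP[a a_s ->]; apply: h_new.
have s_all : all [in s] s by apply/allP.
rewrite cycle_subdivide; apply: (sub_in_cycle _ s_all (cycle_next s_uniq)).
move=> a _ a_s _ /eqP <-; have /andP[_ ->] := h_edges a_s.
have next_a_s : next s a \in s by rewrite mem_next.
by have /andP[] := h_edges next_a_s.
Qed.

End SubdivideCycle.

Section EqualCardSets.

Variables (T : finType) (x y : {set T}).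
Hypotheses (card_xy : #|x| = #|y|) (neq_xy : x != y).

Lemma card_setU_gt : #|x| < #|x :|: y|.
Proof.
rewrite proper_card // properEneq subsetUl andbT; apply: contra neq_xy => /eqP xU.
by rewrite eq_sym eqEcard card_xy leqnn andbT xU subsetUr.
Qed.

Lemma card_setI_lt : #|x :&: y| < #|x|.
Proof.
rewrite proper_card // properEneq subsetIl andbT; apply: contra neq_xy => /eqP xI.
by rewrite eqEcard card_xy leqnn andbT -xI subsetIr.
Qed.

End EqualCardSets.

Section Sunflower.

Variables (T : finType) (gamma : {set T}).

(* A petal of the core gamma: a set obtained by adding one point to gamma.
   These are exactly the vertices of H_gamma. *)
Definition petal (x : {set T}) : bool := (#|x| == #|gamma|.+1) && (gamma \subset x).

Lemma petals_meet_in_core x y : petal x -> petal y -> x != y -> x :&: y = gamma.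
Proof.
move=> /andP[/eqP x_card gx] /andP[/eqP y_card gy] xy; apply/esym/eqP.
rewrite eqEcard subsetI gx gy -ltnS -x_card.
by apply: card_setI_lt; rewrite ?x_card ?y_card.
Qed.

Lemma petal_under_union w x y :
  petal w -> petal x -> petal y -> w \subset x :|: y -> w = x \/ w = y.
Proof.
move=> pw px py wxy.
case: (eqVneq w x) => [|wx]; first by left.
case: (eqVneq w y) => [|wy]; first by right.
have w_core : w = gamma.
  by rewrite -(setIidPl wxy) setIUr !petals_meet_in_core // setUid.
by move: pw; rewrite w_core /petal eqn_leq ltnn andbF.
Qed.

Lemma petal_cycle_unions_inj (s : seq {set T}) :
  uniq s -> 2 < size s -> all petal s ->
  {in s &, injective (fun a => a :|: next s a)}.
Proof.
move=> s_uniq s_big /allP s_petals a c a_s c_s /= unions_eq.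
have next_s w : w \in s -> next s w \in s by rewrite mem_next.
have under_a w : w \in s -> w \subset a :|: next s a -> w = a \/ w = next s a.
  by move=> w_s; apply: petal_under_union; apply: s_petals; rewrite ?next_s.
have [_ nna_a] := next_orbit_distinct s_uniq s_big a_s.
have [nc_c _] := next_orbit_distinct s_uniq s_big c_s.
have c_under : c \subset a :|: next s a by rewrite unions_eq subsetUl.
have nc_under : next s c \subset a :|: next s a by rewrite unions_eq subsetUr.
case: (under_a c c_s c_under) => [-> // | c_na].
case: (under_a _ (next_s c c_s) nc_under) => [nc_a | nc_na].
- by rewrite -c_na nc_a eqxx in nna_a.
- by rewrite nc_na -c_na eqxx in nc_c.
Qed.

End Sunflower.

Lemma J_adjC n k (u v : {set 'I_n}) : J_adj k u v = J_adj k v u.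
Proof. exact: orbC. Qed.

Lemma J_adj_up n k (u v : {set 'I_n}) :
  J_adj k u v -> #|u| = k -> #|v| = k.+1 /\ u \subset v.
Proof.
rewrite /J_adj => + u_card; rewrite u_card eqxx /=.
case/orP=> [/andP[/eqP v_card uv] | /andP[/andP[_]]]; first by [].
by rewrite eqn_leq ltnn andbF.
Qed.

Lemma H_adj_midpoint n k (G : rel {set 'I_n}) (x y : {set 'I_n}) :
  (forall u v, G u v -> J_adj k u v) -> #|x| = k -> #|y| = k -> H_adj G x y ->
  [/\ G x (x :|: y), G (x :|: y) y & #|x :|: y| = k.+1].
Proof.
move=> G_J x_card y_card /andP[xy /existsP[z /andP[xz zy]]].
have [z_card xz_sub] := J_adj_up (G_J _ _ xz) x_card.
have J_yz : J_adj k y z by rewrite J_adjC G_J.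
have [_ yz_sub] := J_adj_up J_yz y_card.
have <- : z = x :|: y.
  apply/esym/eqP; rewrite eqEcard subUset xz_sub yz_sub z_card /=.
  by rewrite -x_card card_setU_gt // x_card y_card.
by split.
Qed.

Theorem proposition5p1 (n k m : nat) (G : rel {set 'I_n}) (gamma : {set 'I_n}) :
  1 <= k -> 2 * k + 1 <= n -> spanning_subgraph_J k G -> 3 <= m ->
  #|gamma| = k.-1 ->
  has_cycle (H_vert k gamma) (H_adj G) m ->
  has_cycle (fun _ => true) G (2 * m).
Proof.
move=> k_gt0 _ [_ G_J] m_ge3 gamma_card [s [s_size s_uniq s_petals s_cycle]].
have k_eq : k = #|gamma|.+1 by rewrite gamma_card prednK.
subst k; have s_big : 2 < size s by rewrite s_size.
have card_s a : a \in s -> #|a| = #|gamma|.+1.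
  by move=> a_s; have /andP[/eqP] := allP s_petals a a_s.
pose mid a := a :|: next s a.
have mid_edges a : a \in s ->
    [/\ G a (mid a), G (mid a) (next s a) & #|mid a| = #|gamma|.+2].
  move=> a_s; have na_s : next s a \in s by rewrite mem_next.
  apply: H_adj_midpoint (card_s _ a_s) (card_s _ na_s) _ => //.
  exact: next_cycle s_cycle a_s.
have [||t_size t_uniq t_cycle] := subdivide_cycle (e := G) (h := mid) s_uniq _
    (petal_cycle_unions_inj s_uniq s_big s_petals).
- by move=> a /mid_edges[-> ->].
- move=> a /mid_edges[_ _ mid_card]; apply/negP => /card_s.
  by rewrite mid_card => /eqP; rewrite eqn_leq ltnn.
exists (subdivide mid s); split => //; first by rewrite t_size s_size.
by apply/allP.
Qed.
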